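(* Let $(X,w)$ be a weighted system in a real Euclidean affine space $\mathbb{A}$ with $\mu_0=0$. The following are equivalent: (i) $\mu_1(p)=\overrightarrow{O}$ for all $p\in\mathbb{A}$; (ii) $\mu_2$ is constant on $\mathbb{A}$; (iii) the restriction of $\mu_2$ to $X$ is constant.
   Context: A weighted system is a finite set $X\subset\mathbb{A}$ with $w:X\to\mathbb{R}$. $\mu_0=\sum_xw(x)$, $\mu_1(p)=\sum_xw(x)\overrightarrow{px}$, $\mu_2(p)=\sum_xw(x)\overrightarrow{px}^2$, where the square of a vector is its inner product with itself. *)

(* The real Euclidean affine space of dimension n is modelled
   as 'rV[R]_n (R : realType) with the standard inner product; the vector
   from p to x is x - p. *)
From mathcomp Require Import all_boot all_order all_algebra.
From mathcomp Require Import reals.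
Set Implicit Arguments. Unset Strict Implicit. Unset Printing Implicit Defensive.
Import Order.TTheory GRing.Theory Num.Theory.
Local Open Scope ring_scope.

Definition dotv (R : realType) (n : nat) (u v : 'rV[R]_n) : R :=
  \sum_(i < n) u 0 i * v 0 i.

(* moments of the weighted system (X, w); X is a duplicate-free list of points *)
Definition mu0 (R : realType) (n : nat) (X : seq 'rV[R]_n) (w : 'rV[R]_n -> R) : R :=
  \sum_(x <- X) w x.

Definition mu1 (R : realType) (n : nat) (X : seq 'rV[R]_n) (w : 'rV[R]_n -> R)
  (p : 'rV[R]_n) : 'rV[R]_n :=
  \sum_(x <- X) w x *: (x - p).

Definition mu2 (R : realType) (n : nat) (X : seq 'rV[R]_n) (w : 'rV[R]_n -> R)
  (p : 'rV[R]_n) : R :=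
  \sum_(x <- X) w x * dotv (x - p) (x - p).

(* Expanding squares, mu2 p = mu2 0 - 2 <m, p> + mu0 <p, p> and
   mu1 p = m - mu0 p, where m = mu1 0.  When mu0 = 0, mu1 is constantly m and
   mu2 is affine with linear part -2 <m, .>, so (i) and (ii) are equivalent.
   If mu2 is constant on X, then X lies in a hyperplane <m, x> = c, hence
   <m, m> = sum_x w x <x, m> = c mu0 = 0 and m = 0. *)
From mathcomp Require Import all_boot all_order all_algebra.
From mathcomp Require Import reals.
From mathcomp Require Import ring lra.
Set Implicit Arguments. Unset Strict Implicit. Unset Printing Implicit Defensive.
Import Order.TTheory GRing.Theory Num.Theory.
Local Open Scope ring_scope.

Section InnerProduct.
Variables (R : realType) (n : nat).
Implicit Types (u v : 'rV[R]_n) (a : R).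

Lemma dotvC u v : dotv u v = dotv v u.
Proof. by apply: eq_bigr => i _; rewrite mulrC. Qed.

Lemma dotv0l v : dotv 0 v = 0.
Proof. by rewrite /dotv big1 // => i _; rewrite mxE mul0r. Qed.

Lemma dotvZl a u v : dotv (a *: u) v = a * dotv u v.
Proof. by rewrite /dotv mulr_sumr; apply: eq_bigr => i _; rewrite mxE mulrA. Qed.

Lemma dotv_suml (I : Type) (r : seq I) (P : pred I) (F : I -> 'rV[R]_n) v :
  dotv (\sum_(i <- r | P i) F i) v = \sum_(i <- r | P i) dotv (F i) v.
Proof.
rewrite /dotv; under eq_bigr do rewrite summxE mulr_suml.
exact: exchange_big.
Qed.

Lemma dotv_normB u v : dotv (u - v) (u - v) = dotv u u - 2 * dotv u v + dotv v v.
Proof.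
rewrite /dotv mulr_sumr -sumrB -big_split /=.
by apply: eq_bigr => i _; rewrite !mxE; ring.
Qed.

Lemma dotv_eq0 u : dotv u u = 0 -> u = 0.
Proof.
move/eqP; rewrite psumr_eq0 => [/allP u0|i _]; last by rewrite -expr2 sqr_ge0.
apply/rowP => i; rewrite mxE.
by have := u0 i (mem_index_enum i); rewrite /= mulf_eq0 orbb => /eqP.
Qed.

End InnerProduct.

Section Moments.
Variables (R : realType) (n : nat) (X : seq 'rV[R]_n) (w : 'rV[R]_n -> R).

Lemma dotv_mu1 v : dotv (mu1 X w 0) v = \sum_(x <- X) w x * dotv x v.
Proof. by rewrite dotv_suml; apply: eq_bigr => x _; rewrite subr0 dotvZl. Qed.

Lemma mu1E p : mu1 X w p = mu1 X w 0 - mu0 X w *: p.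
Proof.
rewrite /mu1 /mu0 scaler_suml -sumrB.
by apply: eq_bigr => x _; rewrite subr0 scalerBr.
Qed.

Lemma mu2E p :
  mu2 X w p = mu2 X w 0 - 2 * dotv (mu1 X w 0) p + mu0 X w * dotv p p.
Proof.
rewrite dotv_mu1 /mu2 /mu0 mulr_sumr mulr_suml -sumrB -big_split /=.
by apply: eq_bigr => x _; rewrite subr0 dotv_normB; ring.
Qed.

Hypothesis mu0_eq0 : mu0 X w = 0.

Lemma mu2_mu0_eq0 p : mu2 X w p = mu2 X w 0 - 2 * dotv (mu1 X w 0) p.
Proof. by rewrite mu2E mu0_eq0 mul0r addr0. Qed.

Lemma mu1_eq0_of_mu2_const_on :
  {in X &, forall x y, mu2 X w x = mu2 X w y} -> forall p, mu1 X w p = 0.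
Proof.
move=> mu2_const p; rewrite mu1E mu0_eq0 scale0r subr0.
have [-> | [y Xy]] : X = [::] \/ exists y, y \in X.
  by case: X => [|y s]; [left | right; exists y; rewrite mem_head].
  by rewrite /mu1 big_nil.
set m := mu1 X w 0.
have hyperplane x : x \in X -> dotv m x = dotv m y.
  move=> Xx; have := mu2_const x y Xx Xy.
  rewrite (mu2_mu0_eq0 x) (mu2_mu0_eq0 y) -/m; lra.
apply: dotv_eq0; rewrite {1}/m dotv_mu1.
rewrite (eq_big_seq (fun x => w x * dotv m y)) => [|x Xx]; last by rewrite dotvC hyperplane.
by rewrite -mulr_suml -/(mu0 X w) mu0_eq0 mul0r.
Qed.

End Moments.

Theorem corollary2p5 (R : realType) (n : nat) (X : seq 'rV[R]_n)
  (w : 'rV[R]_n -> R) (hX : uniq X) (h0 : mu0 X w = 0) :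
  [<-> (forall p : 'rV[R]_n, mu1 X w p = 0);
       (forall p q : 'rV[R]_n, mu2 X w p = mu2 X w q);
       (forall x y : 'rV[R]_n, x \in X -> y \in X -> mu2 X w x = mu2 X w y)].
Proof.
tfae.
- by move=> mu1_0 p q; rewrite (mu2_mu0_eq0 h0 p) (mu2_mu0_eq0 h0 q) mu1_0 !dotv0l.
- by move=> mu2_const x y _ _; apply: mu2_const.
- exact: mu1_eq0_of_mu2_const_on.
Qed.
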